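(* Let $\mathbf{2}=\{\mathbf{0},\mathbf{1}\}$ and let $(\mathrm{Alt},\eta,\mu)$ be the monad on $\mathbf{Set}$ described in the context. Define $\beta:\mathrm{Alt}(\mathbf{2})\to\mathbf{2}$ by $\beta(S)=\mathbf{1}$ if $\{\mathbf{1}\}\in S$ and $\beta(S)=\mathbf{0}$ otherwise. Then $(\mathbf{2},\beta)$ is an Eilenberg–Moore algebra for $\mathrm{Alt}$, i.e. $\beta\circ\eta_{\mathbf{2}}=\mathrm{id}_{\mathbf{2}}$ and $\beta\circ\mu_{\mathbf{2}}=\beta\circ\mathrm{Alt}(\beta)$.
   Context: $\mathbf{Poset}$ is the category of partially ordered sets and monotone maps; $\mathcal{U}:\mathbf{Poset}\to\mathbf{Set}$ forgets the order; $\mathrm{Do}:\mathbf{Set}\to\mathbf{Poset}$ sends $X$ to the discrete poset $(X,=)$ and a function to itself; $\mathrm{Do}\dashv\mathcal{U}$ with unit $\eta^2_X=\mathrm{id}_X$ and counit $\epsilon^2_{(S,\le)}:(S,=)\to(S,\le)$ the identity of $S$. $\mathrm{Up}(X,\le)$ is the set of upward closed subsets of $X$ ordered by $\supseteq$, with $\mathrm{Up}(f)(P)=\{y\mid\exists x\in P,\ f(x)\le y\}$, unit $x\mapsto\{y\mid x\le y\}$, multiplication $S\mapsto\bigcup S$. $\mathrm{Dn}(X,\le)$ is the set of downward closed subsets ordered by $\subseteq$, with $\mathrm{Dn}(f)(P)=\{y\mid\exists x\in P,\ y\le f(x)\}$, unit $x\mapsto\{y\mid y\le x\}$, multiplication $S\mapsto\bigcup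 S$. Let $\lambda_X:\mathrm{Dn}\,\mathrm{Up}(X)\to\mathrm{Up}\,\mathrm{Dn}(X)$, $\lambda_X(S)=\{T\in\mathrm{Dn}(X)\mid\forall s\in S,\ s\cap T\neq\emptyset\}$, and let $(\mathrm{Up}\,\mathrm{Dn},\eta^1,\mu^1)$ be the composite monad with $\eta^1_X=\eta^{\mathrm{Up}}_{\mathrm{Dn}X}\circ\eta^{\mathrm{Dn}}_X$ and $\mu^1_X=\mathrm{Up}(\mu^{\mathrm{Dn}}_X)\circ\mu^{\mathrm{Up}}_{\mathrm{Dn}\mathrm{Dn}X}\circ\mathrm{Up}(\lambda_{\mathrm{Dn}X})$. $\mathrm{Alt}=\mathcal{U}\circ\mathrm{Up}\circ\mathrm{Dn}\circ\mathrm{Do}$ (so $\mathrm{Alt}(X)$ is the set of inclusion-upward-closed families of subsets of $X$), with unit $\eta_X=\mathcal{U}(\eta^1_{\mathrm{Do}X})\circ\eta^2_X$ and multiplication $\mu_X=\mathcal{U}(\mu^1_{\mathrm{Do}X})\circ\mathcal{U}\,\mathrm{Up}\,\mathrm{Dn}(\epsilon^2_{\mathrm{Up}\mathrm{Dn}\mathrm{Do}X})$; this is a monad on $\mathbf{Set}$. *)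

From Stdlib Require Import FunctionalExtensionality PropExtensionality
  ProofIrrelevance ClassicalEpsilon.

Set Implicit Arguments.
Unset Strict Implicit.

Record poset := Poset {
  car :> Type;
  le : car -> car -> Prop;
  le_refl : forall x, le x x;
  le_trans : forall x y z, le x y -> le y z -> le x z;
  le_anti : forall x y, le x y -> le y x -> x = y }.
Arguments le {p} _ _.

Lemma sig_pred_eq (A : Type) (Q : (A -> Prop) -> Prop)
  (P1 P2 : {P : A -> Prop | Q P}) :
  (forall x, proj1_sig P1 x <-> proj1_sig P2 x) -> P1 = P2.
Proof.
  destruct P1 as [P1 H1], P2 as [P2 H2]; simpl; intros H.
  assert (P1 = P2) as E.
  { apply functional_extensionality; intro x; apply propositional_extensionality; auto. }
  subst P2; f_equal; apply proof_irrelevance.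
Qed.

Definition upclosed (X : poset) (P : X -> Prop) :=
  forall x y, P x -> le x y -> P y.
Definition dnclosed (X : poset) (P : X -> Prop) :=
  forall x y, P x -> le y x -> P y.

Definition Up_le (X : poset) (P Q : {P : X -> Prop | @upclosed X P}) :=
  forall x, proj1_sig Q x -> proj1_sig P x.
Definition Up (X : poset) : poset.
Proof.
  refine (@Poset {P : X -> Prop | @upclosed X P} (@Up_le X) _ _ _).
  - intros P x H; exact H.
  - intros P Q R H1 H2 x Hx; auto.
  - intros P Q H1 H2; apply sig_pred_eq; intro x; split; auto.
Defined.

Definition Dn_le (X : poset) (P Q : {P : X -> Prop | @dnclosed X P}) :=
  forall x, proj1_sig P x -> proj1_sig Q x.
Definition Dn (X : poset) : poset.
Proof.
  refine (@Poset {P : X -> Prop | @dnclosed X P} (@Dn_le X) _ _ _).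
  - intros P x H; exact H.
  - intros P Q R H1 H2 x Hx; auto.
  - intros P Q H1 H2; apply sig_pred_eq; intro x; split; auto.
Defined.

Definition Do (X : Type) : poset.
Proof.
  refine (@Poset X (@eq X) _ _ _).
  - reflexivity.
  - intros x y z H1 H2; congruence.
  - intros x y H _; exact H.
Defined.

Lemma upmap_closed (X Y : poset) (f : X -> Y) (P : Up X) :
  @upclosed Y (fun y : Y => exists x, proj1_sig P x /\ le (f x) y).
Proof. intros y y' [x [Hx H]] H'. exists x; split; auto. eapply le_trans; eauto. Qed.
Definition upmap (X Y : poset) (f : X -> Y) (P : Up X) : Up Y :=
  exist _ _ (@upmap_closed X Y f P).

Lemma dnmap_closed (X Y : poset) (f : X -> Y) (P : Dn X) :
  @dnclosed Y (fun y : Y => exists x, proj1_sig P x /\ le y (f x)).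
Proof. intros y y' [x [Hx H]] H'. exists x; split; auto. eapply le_trans; eauto. Qed.
Definition dnmap (X Y : poset) (f : X -> Y) (P : Dn X) : Dn Y :=
  exist _ _ (@dnmap_closed X Y f P).

Lemma up_unit_closed (X : poset) (x : X) : @upclosed X (fun y => le x y).
Proof. intros y y' H H'; eapply le_trans; eauto. Qed.
Definition up_unit (X : poset) (x : X) : Up X := exist _ _ (@up_unit_closed X x).
Lemma dn_unit_closed (X : poset) (x : X) : @dnclosed X (fun y => le y x).
Proof. intros y y' H H'; eapply le_trans; eauto. Qed.
Definition dn_unit (X : poset) (x : X) : Dn X := exist _ _ (@dn_unit_closed X x).

Lemma up_mult_closed (X : poset) (S : Up (Up X)) :
  @upclosed X (fun x : X => exists s : Up X, proj1_sig S s /\ proj1_sig s x).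
Proof. intros x y [s [Hs Hx]] H; exists s; split; auto. exact (proj2_sig s x y Hx H). Qed.
Definition up_mult (X : poset) (S : Up (Up X)) : Up X := exist _ _ (@up_mult_closed X S).
Lemma dn_mult_closed (X : poset) (S : Dn (Dn X)) :
  @dnclosed X (fun x : X => exists s : Dn X, proj1_sig S s /\ proj1_sig s x).
Proof. intros x y [s [Hs Hx]] H; exists s; split; auto. exact (proj2_sig s x y Hx H). Qed.
Definition dn_mult (X : poset) (S : Dn (Dn X)) : Dn X := exist _ _ (@dn_mult_closed X S).

Lemma lambda_closed (X : poset) (S : Dn (Up X)) :
  @upclosed (Dn X) (fun T : Dn X => forall s : Up X, proj1_sig S s ->
                              exists x, proj1_sig s x /\ proj1_sig T x).
Proof.
  intros T T' H HT s Hs; destruct (H s Hs) as [x [H1 H2]]; exists x; split; [exact H1 | exact (HT x H2)].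
Qed.
Definition lambda (X : poset) (S : Dn (Up X)) : Up (Dn X) :=
  exist _ _ (@lambda_closed X S).

Definition eta1 (X : poset) (x : X) : Up (Dn X) := up_unit (dn_unit x).
Definition mu1 (X : poset) (S : Up (Dn (Up (Dn X)))) : Up (Dn X) :=
  upmap (@dn_mult X) (up_mult (upmap (@lambda (Dn X)) S)).

(* counit of Do -| U : the identity (S,=) -> (S,<=) *)
Definition eps2 (S : poset) (x : Do (car S)) : S := x.

Definition Alt (X : Type) : Type := car (Up (Dn (Do X))).
Definition alt_map (X Y : Type) (f : X -> Y) : Alt X -> Alt Y :=
  upmap (@dnmap (Do X) (Do Y) f).
Definition alt_eta (X : Type) (x : X) : Alt X := eta1 (X := Do X) x.
Definition alt_mu (X : Type) (S : Alt (Alt X)) : Alt X :=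
  mu1 (upmap (@dnmap (Do (Alt X)) (Up (Dn (Do X))) (@eps2 (Up (Dn (Do X))))) S).

(* 2 = bool, with 0 = false and 1 = true; the subset {1} of 2 *)
Lemma single1_closed : @dnclosed (Do bool) (fun b => b = true).
Proof. intros x y Hx Hy; simpl in Hy; congruence. Qed.
Definition single1 : Dn (Do bool) := exist _ _ single1_closed.

Definition beta (S : Alt bool) : bool :=
  if excluded_middle_informative (proj1_sig S single1) then true else false.

(* Alt X is the monotone neighbourhood monad in disguise: an element is an
   inclusion-upward-closed family of subsets of X, eta x is the family of sets
   containing x, Alt f S contains T iff some s in S has f[s] inside T, and
   mu S contains T iff some s in S consists of families all containing T.
   Since beta is membership of {1}, both sides of the multiplication law say
   that S contains some s all of whose members contain {1}. *)
From Stdlib Require Import Bool ClassicalEpsilon.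

Lemma in_alt_eta (X : Type) (x : X) (T : Dn (Do X)) :
  proj1_sig (alt_eta x) T <-> proj1_sig T x.
Proof.
  split.
  - intro HT; apply HT; reflexivity.
  - intros Hx y <-; exact Hx.
Qed.

Lemma in_alt_map (X Y : Type) (f : X -> Y) (S : Alt X) (T : Dn (Do Y)) :
  proj1_sig (alt_map f S) T <->
  exists s, proj1_sig S s /\ forall x, proj1_sig s x -> proj1_sig T (f x).
Proof.
  split.
  - intros [s [Hs HsT]]; exists s; split; [exact Hs |].
    intros x Hx; apply HsT; exists x; split; [exact Hx | reflexivity].
  - intros [s [Hs HsT]]; exists s; split; [exact Hs |].
    intros y [x [Hx ->]]; exact (HsT x Hx).
Qed.

(* The witness for the converse is the principal down-set of T, which meets
   every member of s because each member contains T. *)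
Lemma in_alt_mu (X : Type) (S : Alt (Alt X)) (T : Dn (Do X)) :
  proj1_sig (alt_mu S) T <->
  exists s, proj1_sig S s /\ forall a : Alt X, proj1_sig s a -> proj1_sig a T.
Proof.
  split.
  - intros [W [[R [[s [[s0 [Hs0 Hs0s]] HsR]] HRW]] HWT]].
    exists s0; split; [exact Hs0 |].
    intros a Ha.
    assert (Has : proj1_sig s a).
    { apply Hs0s; exists a; split; [exact Ha | intros t Ht; exact Ht]. }
    destruct (HsR W HRW a Has) as [x [Hax HWx]].
    apply (proj2_sig a x T Hax).
    intros y Hy; apply HWT; exists x; split; assumption.
  - intros [s0 [Hs0 Hs0T]].
    exists (dn_unit T); split.
    + exists (lambda (dnmap (@eps2 (Alt X : poset)) s0)); split.
      * exists (dnmap (@eps2 (Alt X : poset)) s0); split.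
        -- exists s0; split; [exact Hs0 | intros t Ht; exact Ht].
        -- intros t Ht; exact Ht.
      * intros a [a0 [Ha0 Hle]].
        exists T; split; [apply Hle, Hs0T, Ha0 | intros t Ht; exact Ht].
    + intros y [x [Hx Hy]]; exact (Hx y Hy).
Qed.

Lemma beta_true (S : Alt bool) : beta S = true <-> proj1_sig S single1.
Proof.
  unfold beta; destruct (excluded_middle_informative _); split;
    intros; auto; discriminate.
Qed.

Theorem mainTheorem6 :
  (forall b : bool, beta (alt_eta b) = b) /\
  (forall S : Alt (Alt bool), beta (alt_mu S) = beta (alt_map beta S)).
Proof.
  split.
  - intro b; apply eq_iff_eq_true.
    rewrite beta_true, in_alt_eta; reflexivity.
  - intro S; apply eq_iff_eq_true.
    rewrite !beta_true, in_alt_mu, in_alt_map.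
    split; intros [s [Hs Hs1]]; exists s; split; try exact Hs;
      intros a Ha; apply beta_true, Hs1, Ha.
Qed.
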